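(* Let $n\ge1$ be an integer. Then $n\equiv 0$ or $1 \pmod 4$ if and only if every permutation $(a_1,\dots,a_n)$ of $\{1,\dots,n\}$ for which the $n-1$ differences $|a_2-a_1|,\dots,|a_n-a_{n-1}|$ are pairwise distinct satisfies $a_1\equiv a_n \pmod 2$. *)

From mathcomp Require Import all_boot.
Set Implicit Arguments. Unset Strict Implicit. Unset Printing Implicit Defensive.

Definition absdiff (a b : nat) : nat := (a - b) + (b - a).

Definition consec_diffs (s : seq nat) : seq nat :=
  pairmap (fun x y => absdiff y x) (head 0 s) (behead s).

Definition graceful_perm (n : nat) (s : seq nat) : Prop :=
  perm_eq s (iota 1 n) /\ uniq (consec_diffs s).

From mathcomp Require Import all_boot zify.

(* Since [|a - b|] and [a + b] have the same parity, the differences of any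
   sequence sum to [a_1 + a_n] modulo 2.  For a graceful permutation of
   [{1..n}] the differences are exactly [{1..n-1}], whose sum [C(n,2)] has the
   parity of [n/2]; so [a_1 = a_n (mod 2)] whenever [n = 0, 1 (mod 4)].
   Conversely the zigzag [1, n, 2, n-1, ...] is graceful, with differences
   [n-1, n-2, ..., 1], and ends at [n/2 + 1]: its endpoints have different
   parity when [n = 2, 3 (mod 4)]. *)

Lemma odd_absdiff a b : odd (absdiff a b) = odd a (+) odd b.
Proof. by rewrite /absdiff; lia. Qed.

Lemma odd_sumn_consec_diffs s :
  odd (sumn (consec_diffs s)) = odd (head 0 s) (+) odd (last 0 s).
Proof.
case: s => [//|x t]; rewrite /consec_diffs /=.
elim: t x => [|y t IH] x /=; first by rewrite addbb.
by rewrite oddD IH odd_absdiff addbACA addbb.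
Qed.

Lemma sumn_iota1 m : sumn (iota 1 m) = 'C(m.+1, 2).
Proof. by rewrite sumnE -bin2_sum big_ltn // add0n /index_iota subn1. Qed.

Lemma odd_bin2 n : odd 'C(n, 2) = odd n./2.
Proof.
elim: n {-2}n (leqnn n) => [|m IH] [|[|n]] // hn.
by rewrite binS bin1 binS bin1 -addnA addnS addnn oddD /= odd_double IH ?addbT // ltnW.
Qed.

Lemma perm_iota1 (s : seq nat) m :
  uniq s -> size s = m -> {subset s <= [pred x | 0 < x <= m]} ->
  perm_eq s (iota 1 m).
Proof.
move=> us sz_s s_range.
have sub : {subset s <= iota 1 m} by move=> x /s_range; rewrite mem_iota.
have le_size : size (iota 1 m) <= size s by rewrite size_iota sz_s.
have [_ eq_s] := uniq_min_size us sub le_size.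
exact: uniq_perm us (iota_uniq 1 m) eq_s.
Qed.

Lemma size_consec_diffs s : size (consec_diffs s) = (size s).-1.
Proof. by rewrite size_pairmap size_behead. Qed.

Lemma consec_diffs_range s m :
  uniq s -> {subset s <= [pred x | 0 < x <= m]} ->
  {subset consec_diffs s <= [pred d | 0 < d <= m.-1]}.
Proof.
case: s => [//|x t]; rewrite /consec_diffs /=.
elim: t x => [//|y t IH] x /= /andP[x_notin uniq_t] s_range d.
have x_range : 0 < x <= m := s_range x (mem_head _ _).
have y_range : 0 < y <= m by apply: s_range; rewrite !inE eqxx orbT.
have /eqP x_neq_y : x != y by apply: contraNneq x_notin => ->; rewrite mem_head.
rewrite inE => /orP[/eqP -> | d_in]; first by rewrite inE /absdiff; lia.
by apply: (IH y) => // z z_in; apply: s_range; rewrite inE z_in orbT.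
Qed.

Lemma graceful_perm_diffs n s :
  graceful_perm n s -> perm_eq (consec_diffs s) (iota 1 n.-1).
Proof.
move=> [perm_s uniq_diffs].
have uniq_s : uniq s by rewrite (perm_uniq perm_s) iota_uniq.
apply: perm_iota1 => //.
  by rewrite size_consec_diffs (perm_size perm_s) size_iota.
apply: consec_diffs_range uniq_s _ => x.
by rewrite (perm_mem perm_s) mem_iota inE; lia.
Qed.

Lemma graceful_perm_endpoints n s :
  graceful_perm n s -> odd (head 0 s) (+) odd (last 0 s) = odd n./2.
Proof.
move=> /graceful_perm_diffs /perm_sumn.
rewrite sumn_iota1 -odd_bin2 -odd_sumn_consec_diffs => ->.
by case: n.
Qed.

Lemma pairmap_map_iota (f : nat -> nat) (g : nat -> nat -> nat) m k :
  pairmap g (f m) (map f (iota m.+1 k)) =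
  map (fun i => g (f i) (f i.+1)) (iota m k).
Proof. by elim: k m => [|k IH] m //=; rewrite IH. Qed.

Definition zigzag n := [seq if odd i then n - i./2 else i./2.+1 | i <- iota 0 n].

Lemma head_zigzag n : 0 < n -> head 0 (zigzag n) = 1.
Proof. by case: n. Qed.

Lemma last_zigzag n : 0 < n -> last 0 (zigzag n) = n./2.+1.
Proof.
case: n => [//|m] _.
rewrite -(nth_last 0) size_map size_iota (nth_map 0) ?nth_iota ?size_iota //=.
by case: ifP; lia.
Qed.

Lemma consec_diffs_zigzag n :
  consec_diffs (zigzag n) = [seq n.-1 - i | i <- iota 0 n.-1].
Proof.
case: n => [//|m]; rewrite /consec_diffs /zigzag /= pairmap_map_iota.
apply/eq_in_map => i; rewrite mem_iota /absdiff.
by case: ifP; case: ifP; lia.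
Qed.

Lemma zigzag_graceful n : graceful_perm n (zigzag n).
Proof.
split; last first.
  rewrite consec_diffs_zigzag map_inj_in_uniq ?iota_uniq // => i j.
  by rewrite !mem_iota; lia.
apply: perm_iota1.
- rewrite map_inj_in_uniq ?iota_uniq // => i j.
  by rewrite !mem_iota; case: ifP; case: ifP; lia.
- by rewrite size_map size_iota.
- by move=> x /mapP[i]; rewrite mem_iota inE => i_lt ->; case: ifP; lia.
Qed.

Theorem corollary1 (n : nat) (hn : 1 <= n) :
  (n %% 4 = 0 \/ n %% 4 = 1) <->
  (forall s : seq nat, graceful_perm n s ->
     head 0 s = last 0 s %[mod 2]).
Proof.
have even_half : ~~ odd n./2 <-> n %% 4 = 0 \/ n %% 4 = 1.
  by rewrite -divn2; split; lia.
split=> [/even_half half_even s graceful_s | graceful_endpoints].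
  have := graceful_perm_endpoints n s graceful_s.
  by rewrite !modn2 (negbTE half_even); do 2 case: odd.
apply/even_half.
have := graceful_endpoints _ (zigzag_graceful n).
by rewrite head_zigzag // last_zigzag // !modn2 /=; case: odd.
Qed.
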